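(* Let $A$ be an Artin algebra, $k\ge1$ an integer and $\mathcal C_1,\dots,\mathcal C_k$ subcategories of $A\text{-mod}$. Then $$\max\{\operatorname{ed}\mathcal C_i\mid 1\le i\le k\}\le\operatorname{ed}(\mathcal C_1\bullet\mathcal C_2\bullet\cdots\bullet\mathcal C_k)\le\sum_{i=1}^k\operatorname{ed}\mathcal C_i+k-1.$$
   Context: Subcategories are full, additive and closed under isomorphisms. For subcategories $\mathcal T_1,\mathcal T_2$, $\mathcal T_1\bullet\mathcal T_2:=\operatorname{add}\{X\mid\exists$ exact $0\to T_1\to X\to T_2\to0$, $T_i\in\mathcal T_i\}$ ($\operatorname{add}$ = closure under finite direct sums and direct summands); $\bullet$ is associative. For a module $T$: $[T]_0=\{0\}$, $[T]_1=\operatorname{add}(T)$, $[T]_n=[T]_1\bullet[T]_{n-1}$. $\operatorname{ed}\mathcal C=\inf\{n\ge0\mid\mathcal C\subseteq[T]_{n+1}$ for some $T\in A\text{-mod}\}$. *)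

From HB Require Import structures.
From mathcomp Require Import all_boot all_order all_algebra.
From mathcomp Require Import boolp.
Set Implicit Arguments. Unset Strict Implicit. Unset Printing Implicit Defensive.
Import Order.TTheory GRing.Theory.
Local Open Scope ring_scope.

Definition is_ideal (R : comNzRingType) (I : R -> Prop) : Prop :=
  [/\ I 0, (forall x y, I x -> I y -> I (x + y)) & (forall r x, I x -> I (r * x))].

Definition artinian (R : comNzRingType) : Prop :=
  forall I : nat -> R -> Prop,
    (forall n, is_ideal (I n)) ->
    (forall n x, I n.+1 x -> I n x) ->
    exists N, forall n, (N <= n)%N -> forall x, I n x <-> I N x.

Definition fin_gen (K : pzRingType) (M : lmodType K) : Prop :=
  exists s : seq M, forall x : M,
    exists c : 'I_(size s) -> K, x = \sum_(i < size s) c i *: s`_i.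

(* An Artin algebra is given by R : comNzRingType with [artinian R] and
   A : algType R with [fin_gen A] (A finitely generated as an R-module). *)

Record fgmod (A : nzRingType) := FGMod {
  mcar :> lmodType A;
  mfg : fin_gen mcar }.

Section Modules.
Variable A : nzRingType.

Definition lin (M N : lmodType A) (f : M -> N) : Prop :=
  forall (a : A) (x y : M), f (a *: x + y) = a *: f x + f y.

Definition is_zero_mod (X : fgmod A) : Prop := forall x : X, x = 0.

Definition mod_iso (X Y : fgmod A) : Prop :=
  exists (f : X -> Y) (g : Y -> X),
    [/\ lin f, lin g, (forall x, g (f x) = x) & (forall y, f (g y) = y)].

Definition summand (Y X : fgmod A) : Prop :=
  exists (i : Y -> X) (p : X -> Y), [/\ lin i, lin p & forall y, p (i y) = y].

Definition biprod (X Y Z : fgmod A) : Prop :=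
  exists (i1 : Y -> X) (i2 : Z -> X) (p1 : X -> Y) (p2 : X -> Z),
    [/\ lin i1, lin i2, lin p1, lin p2 &
    [/\ (forall y, p1 (i1 y) = y), (forall z, p2 (i2 z) = z),
        (forall z, p1 (i2 z) = 0), (forall y, p2 (i1 y) = 0) &
        (forall x, i1 (p1 x) + i2 (p2 x) = x)]].

Definition short_exact (T1 X T2 : fgmod A) : Prop :=
  exists (f : T1 -> X) (g : X -> T2),
    [/\ lin f, lin g, injective f, (forall t, exists x, g x = t) &
        (forall x, g x = 0 <-> exists t, f t = x)].

Definition cls := fgmod A -> Prop.

Inductive fsum (S : cls) : cls :=
| fsum0 X : is_zero_mod X -> fsum S X
| fsumS X Y Z : S Y -> fsum S Z -> biprod X Y Z -> fsum S X.

Definition add (S : cls) : cls := fun X => exists Y, fsum S Y /\ summand X Y.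

Definition subcategory (C : cls) : Prop :=
  [/\ (forall X Y, mod_iso X Y -> C X -> C Y),
      (exists X, is_zero_mod X /\ C X),
      (forall X Y Z, C Y -> C Z -> biprod X Y Z -> C X) &
      (forall X Y, summand X Y -> C Y -> C X)].

Definition bullet (T1 T2 : cls) : cls :=
  add (fun X => exists Y Z, [/\ T1 Y, T2 Z & short_exact Y X Z]).

Fixpoint brack (T : fgmod A) (n : nat) : cls :=
  match n with
  | 0 => is_zero_mod
  | 1 => add (fun X => mod_iso X T)
  | n'.+1 => bullet (add (fun X => mod_iso X T)) (brack T n')
  end.

(* C1 • C2 • ... • C(n+1) for C : nat -> cls (indices 0..n) *)
Fixpoint bullets (C : nat -> cls) (n : nat) : cls :=
  match n with
  | 0 => C 0%N
  | n'.+1 => bullet (bullets C n') (C n)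
  end.

(** extended naturals nat ∪ {oo} as option nat (None = oo) *)
Definition ed_pred (C : cls) (n : nat) : bool :=
  `[< exists T : fgmod A, forall X, C X -> brack T n.+1 X >].

Definition ed (C : cls) : option nat :=
  match pselect (exists n, ed_pred C n) with
  | left h => Some (ex_minn h)
  | right _ => None
  end.

End Modules.

Definition oleq (x y : option nat) : Prop :=
  match x, y with
  | _, None => True
  | None, Some _ => False
  | Some a, Some b => (a <= b)%N
  end.

Definition oadd (x y : option nat) : option nat :=
  match x, y with
  | Some a, Some b => Some (a + b)%N
  | _, _ => None
  end.

From Pilot Require Import Defs.
From mathcomp Require Import all_boot all_order all_algebra.
From HB Require Import structures.
From mathcomp Require Import boolp.
(* [all_algebra] shadows [Defs.add] with the addition of [fraction]. *)
Import Defs.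

(* Write [S1 • S2] for [bullet S1 S2].  The key fact is the inclusion
   (S1 • S2) • S3 ⊆ S1 • (S2 • S3) for classes S1, S2 closed under finite
   direct sums.  Given 0 -> M -> Y -> N -> 0 with M a summand of an
   extension 0 -> A0 -> M' -> B -> 0, pushing out along the split
   mono M -> M' exhibits Y as a summand of an extension Y' of N by M', and
   Q := Y' / A0 is an extension of N by B with 0 -> A0 -> Y' -> Q -> 0.
   Hence [T]_(a+1) • [T]_(b+1) ⊆ [T]_(a+b+2).  Since moreover [T]_n ⊆ [T']_n
   when T is a summand of T', from C_i ⊆ [T_i]_(n_i+1) we get
   C_1 • ... • C_k ⊆ [T_1 ⊕ ... ⊕ T_k]_(Σ (n_i+1)), the upper bound.  The
   lower bound holds because every C_j contains a zero module, so that
   C_i ⊆ C_1 • ... • C_k. *)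

Set Implicit Arguments. Unset Strict Implicit. Unset Printing Implicit Defensive.
Import GRing.Theory.
Local Open Scope ring_scope.
Local Open Scope quotient_scope.

Lemma pairB (U V : zmodType) (x1 x2 : U) (y1 y2 : V) :
  (x1, y1) - (x2, y2) = (x1 - x2, y1 - y2).
Proof. by []. Qed.

Section LinearMaps.
Variable A : nzRingType.
Implicit Types M N P : lmodType A.

Lemma linD M N (f : M -> N) : lin f -> forall x y, f (x + y) = f x + f y.
Proof. by move=> hf x y; rewrite -[x in LHS]scale1r hf scale1r. Qed.

Lemma lin0 M N (f : M -> N) : lin f -> f 0 = 0.
Proof. by move=> hf; apply: (@addrI _ (f 0)); rewrite -linD // !addr0. Qed.

Lemma linZ M N (f : M -> N) : lin f -> forall a x, f (a *: x) = a *: f x.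
Proof. by move=> hf a x; rewrite -[a *: x]addr0 hf lin0 // addr0. Qed.

Lemma linB M N (f : M -> N) : lin f -> forall x y, f (x - y) = f x - f y.
Proof. by move=> hf x y; rewrite -scaleN1r addrC hf scaleN1r addrC. Qed.

Lemma linN M N (f : M -> N) : lin f -> forall x, f (- x) = - f x.
Proof. by move=> hf x; rewrite -sub0r linB // lin0 // sub0r. Qed.

Lemma lin_inj0 M N (f : M -> N) :
  lin f -> injective f -> forall x, f x = 0 -> x = 0.
Proof. by move=> hf finj x fx0; apply: finj; rewrite fx0 lin0. Qed.

Lemma lin_id M : lin (@id M). Proof. by []. Qed.

Lemma lin_comp M N P (f : M -> N) (g : N -> P) : lin f -> lin g -> lin (g \o f).
Proof. by move=> hf hg a x y /=; rewrite hf hg. Qed.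

Lemma lin_cst0 M N : lin (fun _ : M => 0 : N).
Proof. by move=> a x y; rewrite scaler0 addr0. Qed.

Lemma lin_opp M N (f : M -> N) : lin f -> lin (fun x => - f x).
Proof. by move=> hf a x y; rewrite hf opprD scalerN. Qed.

Lemma lin_add M N (f g : M -> N) : lin f -> lin g -> lin (fun x => f x + g x).
Proof. by move=> hf hg a x y; rewrite hf hg scalerDr addrACA. Qed.

Lemma lin_pair M N P (f : M -> N) (g : M -> P) :
  lin f -> lin g -> lin (fun x => (f x, g x)).
Proof. by move=> hf hg a x y; rewrite hf hg. Qed.

Lemma lin_fst M N : lin (@fst M N). Proof. by []. Qed.
Lemma lin_snd M N : lin (@snd M N). Proof. by []. Qed.

Lemma lin_inl M N : lin (fun x : M => (x, 0 : N)).
Proof. exact: lin_pair (@lin_id M) (@lin_cst0 M N). Qed.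

Lemma lin_inr M N : lin (fun y : N => (0 : M, y)).
Proof. exact: lin_pair (@lin_cst0 N M) (@lin_id N). Qed.

Lemma lin_prod_map M N M' N' (f : M -> M') (g : N -> N') :
  lin f -> lin g -> lin (fun w : M * N => (f w.1, g w.2)).
Proof. by move=> hf hg a x y; rewrite /= hf hg. Qed.

End LinearMaps.

Section Span.
Variable A : nzRingType.
Implicit Types M N : lmodType A.

Definition span M (s : seq M) (x : M) : Prop :=
  exists c : 'I_(size s) -> A, x = \sum_(i < size s) c i *: s`_i.

Lemma span0 M (s : seq M) : span s 0.
Proof. by exists (fun=> 0); rewrite big1 // => i _; rewrite scale0r. Qed.

Lemma spanD M (s : seq M) x y : span s x -> span s y -> span s (x + y).
Proof.
move=> [c ->] [d ->]; exists (fun i => c i + d i).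
by rewrite -big_split; apply: eq_bigr => i _; rewrite scalerDl.
Qed.

Lemma spanZ M (s : seq M) a x : span s x -> span s (a *: x).
Proof.
move=> [c ->]; exists (fun i => a * c i).
by rewrite scaler_sumr; apply: eq_bigr => i _; rewrite scalerA.
Qed.

Lemma span_mem M (s : seq M) x : x \in s -> span s x.
Proof.
move=> xs; have ix : (index x s < size s)%N by rewrite index_mem.
exists (fun j => if val j == index x s then 1 else 0).
rewrite (bigD1 (Ordinal ix)) //= eqxx scale1r nth_index // big1 ?addr0 // => j.
by rewrite -val_eqE /= => /negbTE ->; rewrite scale0r.
Qed.

Lemma span_subset M (s t : seq M) x : {subset s <= t} -> span s x -> span t x.
Proof.
move=> st [c ->]; apply: (big_ind (span t)) => [|y z|i _]; first exact: span0.
  exact: spanD.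
by apply/spanZ/span_mem/st/mem_nth.
Qed.

Lemma span_map M N (f : M -> N) (s : seq M) x :
  lin f -> span s x -> span (map f s) (f x).
Proof.
move=> hf [c ->]; rewrite (big_morph f (linD hf) (lin0 hf)).
apply: (big_ind (span _)) => [|y z|i _]; first exact: span0.
  exact: spanD.
by rewrite linZ //; apply/spanZ/span_mem/map_f/mem_nth.
Qed.

Lemma fin_gen_surj M N (f : M -> N) :
  lin f -> (forall y, exists x, f x = y) -> fin_gen M -> fin_gen N.
Proof.
move=> hf fsurj [s hs]; exists (map f s) => y.
by have [x <-] := fsurj y; apply: span_map.
Qed.

Lemma fin_gen_prod M N : fin_gen M -> fin_gen N -> fin_gen (M * N)%type.
Proof.
move=> [s hs] [t ht].
exists (map (fun x => (x, 0)) s ++ map (fun y => (0, y)) t) => -[x y].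
have -> : (x, y) = (x, 0) + (0, y) by congr (_, _); rewrite ?addr0 ?add0r.
apply: spanD.
  apply: (span_subset _ (span_map (@lin_inl _ M N) (hs x))) => z zs.
  by rewrite mem_cat zs.
apply: (span_subset _ (span_map (@lin_inr _ M N) (ht y))) => z zs.
by rewrite mem_cat zs orbT.
Qed.

Lemma fin_gen_rV0 : fin_gen 'rV[A]_0.
Proof. by exists [::] => x; exists (fun=> 0); rewrite big_ord0 thinmx0. Qed.

End Span.

(* [hf] does not occur in the body: it is an argument only so that the
   canonical [zmodClosed] instance below can use it. *)
Definition image_of (A : nzRingType) (K X : lmodType A) (f : K -> X) (hf : lin f)
  : {pred X} := fun x => `[< exists k, f k = x >].

Lemma image_of_zmod_closed (A : nzRingType) (K X : lmodType A) (f : K -> X)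
  (hf : lin f) : zmod_closed (image_of hf).
Proof.
split; first by apply/asboolP; exists 0; rewrite lin0.
move=> _ _ /asboolP[k <-] /asboolP[l <-].
by apply/asboolP; exists (k - l); rewrite linB.
Qed.

HB.instance Definition _ (A : nzRingType) (K X : lmodType A) (f : K -> X)
  (hf : lin f) := GRing.isZmodClosed.Build X (image_of hf) (image_of_zmod_closed hf).

Definition coker (A : nzRingType) (K X : lmodType A) (f : K -> X) (hf : lin f) :=
  Quotient.quot (image_of hf).

Section Cokernel.
Variables (A : nzRingType) (K X : lmodType A) (f : K -> X) (hf : lin f).

Lemma coker_eqP (x y : X) : x = y %[mod coker hf] <-> exists k, f k = x - y.
Proof.
split=> [/eqP|/asboolP fxy]; last by apply/eqP; rewrite -Quotient.idealrBE.
by rewrite -Quotient.idealrBE => /asboolP.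
Qed.

(* [lift_op1] is locked, so rewriting with [pi_coker_scale] cannot unfold it. *)
Definition coker_scale (a : A) : coker hf -> coker hf := lift_op1 (coker hf) ( *:%R a).

Lemma pi_coker_scale a x : \pi_(coker hf) (a *: x) = coker_scale a (\pi x).
Proof.
rewrite /coker_scale -lock; apply/coker_eqP.
have /coker_eqP[k ek] : repr (\pi_(coker hf) x) = x %[mod coker hf] by rewrite reprK.
by exists (- (a *: k)); rewrite linN // linZ // ek scalerBr opprB.
Qed.

Fact coker_scaleA a b q : coker_scale a (coker_scale b q) = coker_scale (a * b) q.
Proof. by elim/quotW: q => x; rewrite -!pi_coker_scale scalerA. Qed.

Fact coker_scale1 : left_id 1 coker_scale.
Proof. by elim/quotW => x; rewrite -pi_coker_scale scale1r. Qed.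

Fact coker_scaleDr : right_distributive coker_scale +%R.
Proof.
move=> a; elim/quotW => x; elim/quotW => y.
by rewrite -pi_addr -!pi_coker_scale scalerDr pi_addr.
Qed.

Fact coker_scaleDl q : {morph coker_scale^~ q : a b / a + b}.
Proof. by elim/quotW: q => x a b; rewrite -!pi_coker_scale scalerDl pi_addr. Qed.

HB.instance Definition _ := GRing.Zmodule.on (coker hf).
HB.instance Definition _ := GRing.Zmodule_isLmodule.Build A (coker hf)
  coker_scaleA coker_scale1 coker_scaleDr coker_scaleDl.

Lemma coker_pi_lin : lin (\pi_(coker hf) : X -> coker hf).
Proof. by move=> a x y; rewrite pi_addr pi_coker_scale. Qed.

Lemma coker_pi_surj q : exists x, \pi_(coker hf) x = q.
Proof. by exists (repr q); rewrite reprK. Qed.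

Lemma coker_pi_eq0 x : \pi_(coker hf) x = 0 <-> exists k, f k = x.
Proof.
rewrite -(raddf0 \pi_(coker hf)); split=> [/coker_eqP|[k fk]].
  by rewrite subr0.
by apply/coker_eqP; exists k; rewrite subr0.
Qed.

Lemma coker_lift (W : lmodType A) (h : X -> W) :
  lin h -> (forall k, h (f k) = 0) ->
  exists2 h' : coker hf -> W, lin h' & forall x, h' (\pi x) = h x.
Proof.
move=> hh hfk; have hrepr x : h (repr (\pi_(coker hf) x)) = h x.
  have /coker_eqP[k fk] : repr (\pi_(coker hf) x) = x %[mod coker hf].
    by rewrite reprK.
  by apply/eqP; rewrite -subr_eq0 -linB // -fk hfk.
exists (h \o repr) => // a; elim/quotW => x; elim/quotW => y.
by rewrite /= -coker_pi_lin !hrepr hh.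
Qed.

End Cokernel.

Section Modules.
Variable A : nzRingType.
Local Notation fg := (fgmod A).
Implicit Types X Y Z : fg.

Definition psum X Y : fg := FGMod (fin_gen_prod (mfg X) (mfg Y)).

Definition zero_fg : fg := FGMod (fin_gen_rV0 A).

Definition coker_fg (K X : fg) (f : K -> X) (hf : lin f) : fg :=
  FGMod (fin_gen_surj (coker_pi_lin hf) (coker_pi_surj (hf := hf)) (mfg X)).

Lemma zero_fg_zero : is_zero_mod zero_fg.
Proof. exact: thinmx0. Qed.

Lemma iso_refl X : mod_iso X X.
Proof. by exists id, id. Qed.

Lemma iso_sym X Y : mod_iso X Y -> mod_iso Y X.
Proof. by move=> [f [g [hf hg gf fg]]]; exists g, f. Qed.

Lemma iso_trans X Y Z : mod_iso X Y -> mod_iso Y Z -> mod_iso X Z.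
Proof.
move=> [f [g [hf hg gf fg]]] [f' [g' [hf' hg' gf' fg']]].
exists (f' \o f), (g \o g'); split; try exact: lin_comp.
- by move=> x /=; rewrite gf' gf.
- by move=> z /=; rewrite fg fg'.
Qed.

Lemma iso_summand X Y : mod_iso X Y -> summand X Y.
Proof. by move=> [f [g [hf hg gf _]]]; exists f, g. Qed.

Lemma summand_refl X : summand X X.
Proof. exact/iso_summand/iso_refl. Qed.

Lemma summand_trans X Y Z : summand X Y -> summand Y Z -> summand X Z.
Proof.
move=> [i [p [hi hp pi]]] [j [q [hj hq qj]]].
by exists (j \o i), (p \o q); split; try exact: lin_comp; move=> x /=; rewrite qj pi.
Qed.

Lemma zero_iso X Y : is_zero_mod X -> mod_iso X Y -> is_zero_mod Y.
Proof. by move=> X0 [f [g [hf _ _ fg]]] y; rewrite -(fg y) (X0 (g y)) (lin0 hf). Qed.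

Lemma biprodP X Y Z : biprod X Y Z <-> mod_iso X (psum Y Z).
Proof.
split=> [[i1 [i2 [p1 [p2 [hi1 hi2 hp1 hp2 [e1 e2 e3 e4 e5]]]]]]|[f [g [hf hg gf fg]]]].
  exists (fun x => (p1 x, p2 x) : psum Y Z), (fun w : psum Y Z => i1 w.1 + i2 w.2).
  split=> [||//|[y z]]; first exact: lin_pair.
    exact: lin_add (lin_comp (@lin_fst _ Y Z) hi1) (lin_comp (@lin_snd _ Y Z) hi2).
  by rewrite /= (linD hp1) (linD hp2) e1 e2 e3 e4 addr0 add0r.
exists (fun y => g (y, 0)), (fun z => g (0, z)), (fun x => (f x).1), (fun x => (f x).2).
split.
- exact: lin_comp (@lin_inl _ Y Z) hg.
- exact: lin_comp (@lin_inr _ Y Z) hg.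
- exact: lin_comp hf (@lin_fst _ Y Z).
- exact: lin_comp hf (@lin_snd _ Y Z).
split=> [y|z|z|y|x]; rewrite ?fg //.
rewrite -linD // -[RHS]gf; congr g.
by case: (f x) => u v; congr (_, _); rewrite ?addr0 ?add0r.
Qed.

Lemma psum_biprod Y Z : biprod (psum Y Z) Y Z.
Proof. exact/biprodP/iso_refl. Qed.

Lemma psum_iso Y Y' Z Z' :
  mod_iso Y Y' -> mod_iso Z Z' -> mod_iso (psum Y Z) (psum Y' Z').
Proof.
move=> [f [g [hf hg gf fg]]] [f' [g' [hf' hg' gf' fg']]].
exists (fun w : psum Y Z => (f w.1, f' w.2) : psum Y' Z').
exists (fun w : psum Y' Z' => (g w.1, g' w.2) : psum Y Z).
split; try exact: lin_prod_map.
- by move=> [y z] /=; rewrite gf gf'.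
- by move=> [y z] /=; rewrite fg fg'.
Qed.

Lemma psum_summand Y Y' Z Z' :
  summand Y Y' -> summand Z Z' -> summand (psum Y Z) (psum Y' Z').
Proof.
move=> [i [p [hi hp pi]]] [i' [p' [hi' hp' pi']]].
exists (fun w : psum Y Z => (i w.1, i' w.2) : psum Y' Z').
exists (fun w : psum Y' Z' => (p w.1, p' w.2) : psum Y Z).
split; try exact: lin_prod_map.
by move=> [y z] /=; rewrite pi pi'.
Qed.

Lemma psum_assoc X Y Z : mod_iso (psum (psum X Y) Z) (psum X (psum Y Z)).
Proof.
exists (fun w : psum (psum X Y) Z => (w.1.1, (w.1.2, w.2)) : psum X (psum Y Z)).
exists (fun w : psum X (psum Y Z) => ((w.1, w.2.1), w.2.2) : psum (psum X Y) Z).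
by split=> // [[[x y] z]|[x [y z]]].
Qed.

Lemma psum_zero_l Y Z : is_zero_mod Y -> mod_iso (psum Y Z) Z.
Proof.
move=> Y0; exists snd, (fun z => (0, z)); split=> //; first exact: lin_inr.
by move=> [y z]; rewrite (Y0 y).
Qed.

Lemma psum_zero_r Y Z : is_zero_mod Z -> mod_iso (psum Y Z) Y.
Proof.
move=> Z0; exists fst, (fun y => (y, 0)); split=> //; first exact: lin_inl.
by move=> [y z]; rewrite (Z0 z).
Qed.

Lemma summand_psum_l X Y : summand X (psum X Y).
Proof. by exists (fun x => (x, 0)), fst; split=> //; apply: lin_inl. Qed.

Lemma summand_psum_r X Y : summand Y (psum X Y).
Proof. by exists (fun y => (0, y)), snd; split=> //; apply: lin_inr. Qed.

End Modules.

Section AdditiveClosure.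
Variable A : nzRingType.
Local Notation fg := (fgmod A).
Implicit Types (S : cls A) (X Y Z : fg).

Definition fsum_closed S := forall X, fsum S X -> S X.

Lemma fsum_iso S X Y : mod_iso X Y -> fsum S X -> fsum S Y.
Proof.
move=> + hX; case: hX => [X0 X00|X0 Y0 Z0 hY hZ /biprodP hb] XY.
  exact/fsum0/(zero_iso X00 XY).
by apply: (fsumS hY hZ); apply/biprodP/(iso_trans (iso_sym XY)).
Qed.

Lemma fsum_psum S Y Z : fsum S Y -> fsum S Z -> fsum S (psum Y Z).
Proof.
move=> hY hZ; elim: hY => [Y0 Y00|Y0 Y1 Y2 hY1 _ IH /biprodP hb].
  exact: fsum_iso (iso_sym (psum_zero_l Z Y00)) hZ.
apply: (fsumS hY1 IH); apply/biprodP.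
exact: iso_trans (psum_iso hb (iso_refl Z)) (psum_assoc Y1 Y2 Z).
Qed.

Lemma fsum_mono S S' X : (forall Y, S Y -> S' Y) -> fsum S X -> fsum S' X.
Proof.
move=> SS'; elim=> [X0 X00|X0 Y0 Z0 hY _ IH hb]; first exact: fsum0.
exact: fsumS (SS' _ hY) IH hb.
Qed.

Lemma add_zero S X : is_zero_mod X -> add S X.
Proof. by move=> X0; exists X; split; [exact: fsum0|exact: summand_refl]. Qed.

Lemma add_sub S X : S X -> add S X.
Proof.
move=> hX; exists X; split; last exact: summand_refl.
apply: (fsumS hX (fsum0 _ (@zero_fg_zero A))); apply/biprodP.
exact/iso_sym/psum_zero_r/zero_fg_zero.
Qed.

Lemma add_summand S X Y : summand X Y -> add S Y -> add S X.
Proof. by move=> XY [Z [hZ YZ]]; exists Z; split=> //; apply: summand_trans XY YZ. Qed.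

Lemma add_mono S S' X : (forall Y, S Y -> S' Y) -> add S X -> add S' X.
Proof. by move=> SS' [Y [hY XY]]; exists Y; split=> //; apply: fsum_mono hY. Qed.

Lemma fsum_add S : fsum_closed (add S).
Proof.
move=> X; elim=> [X0 X00|X0 Y Z [Y' [hY' YY']] _ [Z' [hZ' ZZ']] /biprodP XYZ].
  exact: add_zero X00.
exists (psum Y' Z'); split; first exact: fsum_psum.
exact: summand_trans (iso_summand XYZ) (psum_summand YY' ZZ').
Qed.

Lemma add_idem S X : add (add S) X -> add S X.
Proof. by move=> [Y [hY XY]]; apply: add_summand XY (fsum_add hY). Qed.

End AdditiveClosure.

Section Extensions.
Variable A : nzRingType.
Local Notation fg := (fgmod A).
Implicit Types (S : cls A) (X Y Z : fg).

Definition ext S1 S2 : cls A :=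
  fun X => exists Y Z, [/\ S1 Y, S2 Z & short_exact Y X Z].

Lemma exact_comp0 (T1 X T2 : fg) (f : T1 -> X) (g : X -> T2) :
  (forall x, g x = 0 <-> exists t, f t = x) -> forall t, g (f t) = 0.
Proof. by move=> fgex t; apply/fgex; exists t. Qed.

Lemma ses_zero_r X Z : is_zero_mod Z -> short_exact X X Z.
Proof.
move=> Z0; exists id, (fun=> 0); split=> //.
- by move=> t; exists 0; rewrite (Z0 t).
- by move=> x; split=> // _; exists x.
Qed.

Lemma ses_zero_l X Z : is_zero_mod Z -> short_exact Z X X.
Proof.
move=> Z0; exists (fun=> 0), id; split=> //.
- exact: lin_cst0.
- by move=> z z' _; rewrite (Z0 z) (Z0 z').
- by move=> x; exists x.
- by move=> x; split=> [->|[z <-]]; first exists 0.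
Qed.

Lemma ses_push_summand (M Y N M' : fg) : short_exact M Y N -> summand M M' ->
  exists Y' : fg, short_exact M' Y' N /\ summand Y Y'.
Proof.
(* [Y'] is the pushout (Y ⊕ M') / {(f m, - i m)}; [r] retracts it onto [Y]. *)
move=> [f [g [hf hg finj gsurj fgex]]] [i [p [hi hp piK]]].
pose phi (m : M) : psum Y M' := (f m, - i m).
have hphi : lin phi := lin_pair hf (lin_opp hi).
have [g' hg' g'E] : exists2 g' : coker hphi -> N, lin g' & forall w, g' (\pi w) = g w.1.
  apply: coker_lift (lin_comp (@lin_fst _ Y M') hg) _ => m.
  exact: exact_comp0 fgex m.
have [r hr rE] : exists2 r : coker hphi -> Y, lin r &
    forall w, r (\pi w) = w.1 + f (p w.2).
  apply: coker_lift _ _ => [|m].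
    exact: lin_add (@lin_fst _ Y M') (lin_comp (@lin_snd _ Y M') (lin_comp hp hf)).
  by rewrite /= (linN hp) piK (linN hf) subrr.
exists (coker_fg hphi); split.
  exists (fun m' => \pi_(coker hphi) (0, m')), g'; split=> //.
  - exact: lin_comp (@lin_inr _ Y M') (coker_pi_lin hphi).
  - move=> a b /coker_eqP[m]; rewrite pairB => -[fm0 ima].
    have m0 : m = 0 by apply: (lin_inj0 hf finj); rewrite fm0 subrr.
    by apply/eqP; rewrite -subr_eq0 -ima m0 (lin0 hi) oppr0.
  - by move=> t; have [y <-] := gsurj t; exists (\pi_(coker hphi) (y, 0)); rewrite g'E.
  move=> q; have [[y m'] <-] := coker_pi_surj q; rewrite g'E /=; split.
    move=> /fgex[m fm]; exists (m' + i m); apply/coker_eqP; exists (- m).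
    by rewrite /phi (linN hf) (linN hi) opprK pairB fm sub0r addrC addKr.
  move=> [t /coker_eqP[k]]; rewrite pairB => -[fk _].
  have -> : y = f (- k) by rewrite (linN hf) fk sub0r opprK.
  exact: exact_comp0 fgex _.
exists (fun y => \pi_(coker hphi) (y, 0)), r; split=> //.
  exact: lin_comp (@lin_inl _ Y M') (coker_pi_lin hphi).
by move=> y; rewrite rE /= (lin0 hp) (lin0 hf) addr0.
Qed.

Lemma ses_compose (A0 M B Y N : fg) : short_exact A0 M B -> short_exact M Y N ->
  exists Q : fg, short_exact A0 Y Q /\ short_exact B Q N.
Proof.
move=> [a [b [ha hb ainj bsurj abex]]] [f [g [hf hg finj gsurj fgex]]].
have hfa : lin (f \o a) := lin_comp ha hf.
(* [Q] is Y / f(a(A0)); B embeds into it by t |-> class of f (sec t). *)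
have [sec bsec] := choice bsurj.
have secE m t : b m = t -> \pi_(coker hfa) (f m) = \pi_(coker hfa) (f (sec t)).
  move=> bm; apply/coker_eqP; rewrite -(linB hf).
  have /abex[x ax] : b (m - sec t) = 0 by rewrite (linB hb) bsec bm subrr.
  by exists x; rewrite /= ax.
have [v hv vE] : exists2 v : coker hfa -> N, lin v &
    forall y, v (\pi_(coker hfa) y) = g y.
  by apply: coker_lift hg _ => x; apply: exact_comp0 fgex (a x).
exists (coker_fg hfa); split.
  exists (f \o a), \pi_(coker hfa); split=> //.
  - exact: coker_pi_lin.
  - by move=> x y /finj/ainj.
  - exact: coker_pi_surj.
  - by move=> y; rewrite coker_pi_eq0.
exists (fun t => \pi_(coker hfa) (f (sec t))), v; split=> //.
- move=> c t t'; rewrite -(coker_pi_lin hfa) -hf; apply/esym/secE.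
  by rewrite hb !bsec.
- move=> t t' /coker_eqP[x]; rewrite -(linB hf) => /finj ax.
  by apply/eqP; rewrite -subr_eq0 -(bsec t) -(bsec t') -(linB hb) -ax exact_comp0.
- by move=> n; have [y <-] := gsurj n; exists (\pi_(coker hfa) y).
move=> q; have [y <-] := coker_pi_surj q; rewrite vE; split.
  by move=> /fgex[m <-]; exists (b m); apply/esym/secE.
by move=> [t e]; rewrite -vE -e vE exact_comp0.
Qed.

Lemma ses_sum (A1 E1 B1 A2 E2 B2 M : fg) :
  short_exact A1 E1 B1 -> short_exact A2 E2 B2 -> biprod M E1 E2 ->
  short_exact (psum A1 A2) M (psum B1 B2).
Proof.
move=> [f1 [g1 [hf1 hg1 f1inj g1surj ex1]]] [f2 [g2 [hf2 hg2 f2inj g2surj ex2]]].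
move=> [j1 [j2 [q1 [q2 [hj1 hj2 hq1 hq2 [e1 e2 e3 e4 e5]]]]]].
have q1E x y : q1 (j1 x + j2 y) = x by rewrite (linD hq1) e1 e3 addr0.
have q2E x y : q2 (j1 x + j2 y) = y by rewrite (linD hq2) e2 e4 add0r.
exists (fun w : psum A1 A2 => j1 (f1 w.1) + j2 (f2 w.2)).
exists (fun m => (g1 (q1 m), g2 (q2 m)) : psum B1 B2); split.
- exact: lin_add (lin_comp (lin_comp (@lin_fst _ A1 A2) hf1) hj1)
                 (lin_comp (lin_comp (@lin_snd _ A1 A2) hf2) hj2).
- exact: lin_pair (lin_comp hq1 hg1) (lin_comp hq2 hg2).
- move=> [a1 a2] [b1 b2] /= e.
  have := congr1 q1 e; rewrite !q1E => /f1inj ->.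
  by have := congr1 q2 e; rewrite !q2E => /f2inj ->.
- move=> [t1 t2]; have [x1 <-] := g1surj t1; have [x2 <-] := g2surj t2.
  by exists (j1 x1 + j2 x2); rewrite q1E q2E.
move=> m; split=> [[/ex1[a1 fa1] /ex2[a2 fa2]]|[[a1 a2] <-]].
  by exists (a1, a2); rewrite /= fa1 fa2 e5.
by rewrite /= q1E q2E (exact_comp0 ex1) (exact_comp0 ex2).
Qed.

Lemma fsum_ext S1 S2 M : fsum (ext S1 S2) M -> ext (fsum S1) (fsum S2) M.
Proof.
elim=> [X X0|X E Z [A1 [B1 [hA1 hB1 s1]]] _ [A2 [B2 [hA2 hB2 s2]]] hb].
  by exists X, X; split; [exact: fsum0|exact: fsum0|exact: ses_zero_r].
exists (psum A1 A2), (psum B1 B2); split.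
- exact: fsumS hA1 hA2 (psum_biprod A1 A2).
- exact: fsumS hB1 hB2 (psum_biprod B1 B2).
- exact: ses_sum s1 s2 hb.
Qed.

Lemma bullet_mono S1 S2 S1' S2' X :
  (forall Y, S1 Y -> S1' Y) -> (forall Y, S2 Y -> S2' Y) ->
  bullet S1 S2 X -> bullet S1' S2' X.
Proof.
move=> h1 h2; apply: add_mono => Y [M [N [hM hN hY]]].
by exists M, N; split; [apply: h1|apply: h2|].
Qed.

Lemma sub_bulletl S1 S2 X Z : is_zero_mod Z -> S2 Z -> S1 X -> bullet S1 S2 X.
Proof.
by move=> Z0 hZ hX; apply: add_sub; exists X, Z; split=> //; apply: ses_zero_r.
Qed.

Lemma sub_bulletr S1 S2 X Z : is_zero_mod Z -> S1 Z -> S2 X -> bullet S1 S2 X.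
Proof.
by move=> Z0 hZ hX; apply: add_sub; exists Z, X; split=> //; apply: ses_zero_l.
Qed.

Lemma bulletA_sub S1 S2 S3 X : fsum_closed S1 -> fsum_closed S2 ->
  bullet (bullet S1 S2) S3 X -> bullet S1 (bullet S2 S3) X.
Proof.
move=> cl1 cl2 hX; apply: add_idem; apply: add_mono hX.
move=> Y [M [N [[M' [hM' MM']] hN hY]]].
have [Y' [hY' YY']] := ses_push_summand hY MM'.
have [A0 [B [hA0 hB hM'ext]]] := fsum_ext hM'.
have [Q [hA0Y' hBQ]] := ses_compose hM'ext hY'.
apply: add_summand YY' (add_sub _); exists A0, Q; split=> //; first exact: cl1.
by apply: add_sub; exists B, N; split=> //; apply: cl2.
Qed.

End Extensions.

Local Close Scope ring_scope.

Section Brackets.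
Variable A : nzRingType.
Local Notation fg := (fgmod A).
Implicit Types T X : fg.

Lemma brack_fsum_closed T n : fsum_closed (brack T n.+1).
Proof. by case: n => [|n]; apply: fsum_add. Qed.

Lemma bullet_brack T a b X :
  bullet (brack T a.+1) (brack T b.+1) X -> brack T (a + b).+2 X.
Proof.
elim: a X => [|a IH] X; first by rewrite add0n.
move=> hX; have := bulletA_sub (@brack_fsum_closed T 0) (@brack_fsum_closed T a) hX.
by rewrite addSn; apply: bullet_mono => // Y; apply: IH.
Qed.

Lemma brack_summand T T' n X : summand T T' -> brack T n X -> brack T' n X.
Proof.
move=> TT'; have brack1 Y : brack T 1 Y -> brack T' 1 Y.
  move=> hY; apply: add_idem; apply: add_mono hY => Z ZT.
  apply: add_summand (summand_trans (iso_summand ZT) TT') _.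
  exact/add_sub/iso_refl.
elim: n X => [|[|n] IH] X //; first exact: brack1.
by apply: bullet_mono => Y; [apply: brack1|apply: IH].
Qed.

Lemma sub_bullets (C : nat -> cls A) j :
  (forall i, i <= j -> exists Z, is_zero_mod Z /\ C i Z) ->
  forall i X, i <= j -> C i X -> bullets C j X.
Proof.
elim: j => [|j IH] hzero i X; first by rewrite leqn0 => /eqP ->.
have {}IH := IH (fun i hi => hzero i (leqW hi)).
rewrite leq_eqVlt => /orP[/eqP-> hX|hi hX].
  have [Z [Z0 CZ]] := hzero 0 (leq0n _).
  exact: sub_bulletr Z0 (IH 0 Z (leq0n _) CZ) hX.
have [Z [Z0 CZ]] := hzero j.+1 (leqnn _).
exact: sub_bulletl Z0 CZ (IH i X hi hX).
Qed.

Lemma bullets_brack (C : nat -> cls A) (n : nat -> nat) j :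
  (forall i, i <= j -> exists T, forall X, C i X -> brack T (n i).+1 X) ->
  exists T, forall X, bullets C j X -> brack T (\sum_(i < j.+1) n i + j).+1 X.
Proof.
elim: j => [|j IH] hC.
  have [T hT] := hC 0 (leqnn 0).
  by exists T => X; rewrite big_ord1 addn0; apply: hT.
have [T1 h1] := IH (fun i hi => hC i (leqW hi)).
have [T2 h2] := hC j.+1 (leqnn _).
exists (psum T1 T2) => X hX; rewrite big_ord_recr /= addnS addnAC.
apply: bullet_brack; apply: bullet_mono hX => Y hY.
  exact: brack_summand (summand_psum_l T1 T2) (h1 Y hY).
exact: brack_summand (summand_psum_r T1 T2) (h2 Y hY).
Qed.

End Brackets.

Section ExtensionDegree.
Variable A : nzRingType.
Implicit Types C D : cls A.

Lemma ed_some C m :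
  ed C = Some m -> exists T : fgmod A, forall X, C X -> brack T m.+1 X.
Proof. by rewrite /ed; case: pselect => // h [<-]; case: ex_minnP => m' /asboolP. Qed.

Lemma ed_le C m :
  (exists T : fgmod A, forall X, C X -> brack T m.+1 X) -> oleq (ed C) (Some m).
Proof.
move=> hm; rewrite /ed; case: pselect => [h|]; last by case; exists m; apply/asboolP.
by case: ex_minnP => m' _; apply; apply/asboolP.
Qed.

Lemma ed_mono C D : (forall X, C X -> D X) -> oleq (ed C) (ed D).
Proof.
move=> CD; case eD: (ed D) => [m|]; last by case: (ed C).
have [T hT] := ed_some eD.
by apply: ed_le; exists T => X /CD /hT.
Qed.

End ExtensionDegree.

Lemma big_oaddE (I : Type) (r : seq I) (F : I -> option nat) :
  \big[oadd/Some 0]_(i <- r) F i =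
  if all (fun i => F i != None) r then Some (\sum_(i <- r) odflt 0 (F i)) else None.
Proof.
elim: r => [|i r IH]; first by rewrite !big_nil.
by rewrite !big_cons IH /=; case: (F i) => [n|] //=; case: all.
Qed.

Theorem corollary2p9 (R : comNzRingType) (A : algType R)
  (hR : artinian R) (hA : fin_gen A)
  (k : nat) (hk : (1 <= k)%N) (C : nat -> cls A)
  (hC : forall i, (i < k)%N -> subcategory (C i)) :
  (forall i, (i < k)%N -> oleq (ed (C i)) (ed (bullets C k.-1)))
  /\ oleq (ed (bullets C k.-1))
          (oadd (\big[oadd/Some 0%N]_(i < k) ed (C i)) (Some k.-1)).
Proof.
case: k hk hC => // k _ hC /=.
have hzero i : i <= k -> exists Z, is_zero_mod Z /\ C i Z by move=> /hC[].
split=> [i hi|]; first by have := sub_bullets hzero hi; apply: ed_mono.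
rewrite big_oaddE; case: allP => [fin|_]; last by case: ed.
pose n i := odflt 0 (ed (C i)).
have [T hT] : exists T,
    forall X, bullets C k X -> brack T (\sum_(i < k.+1) n i + k).+1 X.
  apply: bullets_brack => i hi; apply: ed_some.
  by move: (fin (Ordinal (hi : i < k.+1)) (mem_index_enum _)); rewrite /n; case: ed.
by apply: ed_le; exists T.
Qed.
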